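(* Let $G$ be a $K_4$-free disk graph, let $\mathsf{opt}$ be the minimum size of an odd cycle transversal of $G$, and let $\mathcal{T}$ be a maximal packing of the triangles of $G$. Let $\rho_0\ge 1$ and let $X_1$ be an odd cycle transversal of $G-V(\mathcal{T})$ of size at most $\rho_0$ times the minimum size of an odd cycle transversal of $G-V(\mathcal{T})$. Set $S_1=V(\mathcal{T})\cup X_1$ and $a=|\mathcal{T}|/\mathsf{opt}$ (when $\mathsf{opt}>0$). Then $|S_1|\le (3a+\rho_0(1-a))\cdot\mathsf{opt}$, equivalently $|S_1|\le 3|\mathcal{T}|+\rho_0(\mathsf{opt}-|\mathcal{T}|)$.
   Context: A disk graph is the intersection graph of a finite set of closed disks in the plane; $K_4$-free means no complete subgraph on 4 vertices. An odd cycle transversal of $G$ is a set $S\subseteq V(G)$ with $G-S$ bipartite. A triangle is a set of three pairwise adjacent vertices; a packing of triangles is a collection of pairwise vertex-disjoint triangles, maximal if no further triangle of $G$ can be added; $V(\mathcal{T})$ is the union of the triangles in $\mathcal{T}$. In the paper $X_1$ is the output of a $\rho_0$-approximation algorithm for \textsc{Bipartization} on planar graphs (the graph $G-V(\mathcal{T})$ is triangle-free, hence planar). *)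

From mathcomp Require Import all_boot all_order all_algebra.
Set Implicit Arguments. Unset Strict Implicit. Unset Printing Implicit Defensive.
Import Order.TTheory GRing.Theory Num.Theory.
Local Open Scope ring_scope.

Section Defs.
Variables (R : realFieldType) (T : finType).

(* Disk graph: vertex v is the closed disk with center (cx v, cy v) and
   radius rad v (> 0); distinct u v are adjacent iff their closed disks
   intersect, i.e. the distance between centers is <= sum of radii. *)
Definition disk_adj (cx cy rad : T -> R) : rel T :=
  fun u v => (u != v) &&
    ((cx u - cx v) ^+ 2 + (cy u - cy v) ^+ 2 <= (rad u + rad v) ^+ 2).

Variable (e : rel T).

Definition K4_free : Prop :=
  forall K : {set T}, #|K| = 4%N ->
    ~ (forall u v, u \in K -> v \in K -> u != v -> e u v).

Definition is_triangle (t : {set T}) : bool :=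
  (#|t| == 3%N) && [forall u in t, forall v in t, (u != v) ==> e u v].

Definition bipartite_on (D : {set T}) : bool :=
  [exists f : {ffun T -> bool},
     [forall u in D, forall v in D, e u v ==> (f u != f v)]].

Definition oct_of (D S : {set T}) : bool :=
  (S \subset D) && bipartite_on (D :\: S).

(* minimum size of an odd cycle transversal of G[D] (D itself is one) *)
Definition oct_number (D : {set T}) : nat :=
  \big[minn/#|D|]_(S : {set T} | oct_of D S) #|S|.

Definition triangle_packing (P : {set {set T}}) : Prop :=
  (forall t, t \in P -> is_triangle t) /\ trivIset P.

Definition maximal_triangle_packing (P : {set {set T}}) : Prop :=
  triangle_packing P /\
  forall t : {set T}, is_triangle t -> t \notin P -> ~ [disjoint t & cover P].

End Defs.

(** Every odd cycle transversal of G must hit each triangle of the packing in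
    a distinct vertex, and what it keeps outside V(T) is an odd cycle
    transversal of G - V(T).  Hence opt >= |T| + oct(G - V(T)), while
    |S_1| <= 3|T| + |X_1| <= 3|T| + rho0 oct(G - V(T)). *)

From HB Require Import structures.
From mathcomp Require Import all_boot all_order all_algebra.
From mathcomp Require Import ring.
Import Order.TTheory GRing.Theory Num.Theory.

#[local] HB.instance Definition _ := SemiGroup.isComLaw.Build nat minn minnA minnC.

Section OddCycleTransversal.
Set Implicit Arguments.
Unset Strict Implicit.

Variables (T : finType) (e : rel T).

Lemma bipartite_onS (A B : {set T}) :
  A \subset B -> bipartite_on e B -> bipartite_on e A.
Proof.
move=> sAB /existsP [f /forallP fB]; apply/existsP; exists f.
apply/forallP => u; apply/implyP => Au; apply/forallP => v; apply/implyP => Av.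
by have /forallP /(_ v) := implyP (fB u) (subsetP sAB u Au); rewrite (subsetP sAB v Av).
Qed.

Lemma triangle_not_bipartite (t : {set T}) : is_triangle e t -> ~~ bipartite_on e t.
Proof.
case/andP => /eqP t3 /forallP adj_t; apply/existsP => -[f /forallP f_t].
have proper u v : u \in t -> v \in t -> u != v -> f u != f v.
  move=> ut vt uv; have /forallP /(_ v) := implyP (f_t u) ut; rewrite vt /=.
  by have /forallP /(_ v) := implyP (adj_t u) ut; rewrite vt uv /= => ->.
have /card_gt2P [x [y [z [[xt yt zt] [xy yz zx]]]]] : (2 < #|t|)%N by rewrite t3.
move: (proper _ _ xt yt xy) (proper _ _ yt zt yz) (proper _ _ zt xt zx).
by case: (f x); case: (f y); case: (f z).
Qed.

Lemma oct_of_meets_triangle (D S t : {set T}) :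
  oct_of e D S -> is_triangle e t -> t \subset D -> ~~ [disjoint t & S].
Proof.
case/andP => _ bipDS tri_t sub_tD; apply/negP => dis_tS.
have sub_tDS : t \subset D :\: S by rewrite subsetD sub_tD dis_tS.
by have := triangle_not_bipartite tri_t; rewrite (bipartite_onS sub_tDS bipDS).
Qed.

Lemma oct_of_setD (D S C : {set T}) : oct_of e D S -> oct_of e (D :\: C) (S :\: C).
Proof.
case/andP => sSD bipDS; rewrite /oct_of setSD //=.
apply: bipartite_onS bipDS; apply/subsetP => x; rewrite !inE.
by case: (x \in C); case: (x \in S).
Qed.

Lemma oct_number_le (D S : {set T}) : oct_of e D S -> (oct_number e D <= #|S|)%N.
Proof. by move=> octS; rewrite /oct_number (bigD1 S) //= geq_minl. Qed.

Lemma oct_of_self (D : {set T}) : oct_of e D D.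
Proof.
rewrite /oct_of subxx setDv; apply/existsP; exists [ffun=> true].
by apply/forallP => u; rewrite inE.
Qed.

Lemma oct_number_ge (D : {set T}) (k : nat) :
  (forall S, oct_of e D S -> k <= #|S|)%N -> (k <= oct_number e D)%N.
Proof.
move=> lb; apply: (big_ind (fun m => k <= m)%N) => [||S]; first exact/lb/oct_of_self.
  by move=> m n km kn; rewrite leq_min km kn.
exact: lb.
Qed.

End OddCycleTransversal.

Lemma card_trivIset_le_hitting (T : finType) (P : {set {set T}}) (S : {set T}) :
  trivIset P -> (forall B, B \in P -> ~~ [disjoint B & S]) ->
  (#|P| <= #|S :&: cover P|)%N.
Proof.
move=> trivP hit; apply: leq_trans (leq_imset_card (pblock P) _); apply: subset_leq_card.
apply/subsetP => B PB; have /set0Pn [x] : B :&: S != set0 by rewrite setI_eq0 hit.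
rewrite inE => /andP [Bx Sx]; apply/imsetP; exists x; last by rewrite (def_pblock trivP PB Bx).
by rewrite inE Sx; apply/bigcupP; exists B.
Qed.

Section TrianglePacking.
Set Implicit Arguments.
Unset Strict Implicit.

Variables (T : finType) (e : rel T) (P : {set {set T}}).
Hypothesis packP : triangle_packing e P.

Lemma card_cover_triangle_packing : #|cover P| = (3 * #|P|)%N.
Proof.
have [triP /eqP <-] := packP; rewrite mulnC -sum_nat_const.
by apply: eq_bigr => t /triP /andP [/eqP].
Qed.

Lemma oct_number_triangle_packing :
  (oct_number e (~: cover P) + #|P| <= oct_number e [set: T])%N.
Proof.
have [triP trivP] := packP; apply: oct_number_ge => S octS.
rewrite -(cardsID (cover P) S) addnC leq_add //.
  apply: card_trivIset_le_hitting => // t Pt.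
  exact: oct_of_meets_triangle octS (triP t Pt) (subsetT t).
by rewrite -setTD; apply/oct_number_le/oct_of_setD.
Qed.

End TrianglePacking.

Local Open Scope ring_scope.

Theorem lemma7 (R : realFieldType) (T : finType) (cx cy rad : T -> R)
  (hrad : forall v, 0 < rad v)
  (hK4 : K4_free (disk_adj cx cy rad))
  (P : {set {set T}}) (hP : maximal_triangle_packing (disk_adj cx cy rad) P)
  (rho0 : R) (hrho : 1 <= rho0)
  (X1 : {set T})
  (hX1 : oct_of (disk_adj cx cy rad) (~: cover P) X1)
  (hX1s : (#|X1|%:R : R) <=
          rho0 * (oct_number (disk_adj cx cy rad) (~: cover P))%:R) :
  let opt := oct_number (disk_adj cx cy rad) [set: T] in
  let S1 := cover P :|: X1 in
  ((0 < opt)%N ->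
     let a := (#|P|%:R / opt%:R : R) in
     (#|S1|%:R : R) <= (3 * a + rho0 * (1 - a)) * opt%:R) /\
  (#|S1|%:R : R) <= 3 * (#|P|%:R) + rho0 * (opt%:R - #|P|%:R).
Proof.
move=> opt S1; have [packP _] := hP.
have card_S1 : (#|S1| <= 3 * #|P| + #|X1|)%N.
  by rewrite -(card_cover_triangle_packing packP) leq_card_setU.
have oct_rest : (oct_number (disk_adj cx cy rad) (~: cover P))%:R <= opt%:R - #|P|%:R :> R.
  by rewrite lerBrDr -natrD ler_nat oct_number_triangle_packing.
have bound : #|S1|%:R <= 3 * #|P|%:R + rho0 * (opt%:R - #|P|%:R) :> R.
  apply: le_trans (_ : (3 * #|P| + #|X1|)%N%:R <= _); first by rewrite ler_nat.
  rewrite natrD natrM lerD2l (le_trans hX1s) // ler_pM2l //.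
  exact: lt_le_trans ltr01 hrho.
split=> // opt_gt0; cbv zeta; set a := _ / _.
have opt_neq0 : opt%:R != 0 :> R by rewrite pnatr_eq0 -lt0n.
suff -> : (3 * a + rho0 * (1 - a)) * opt%:R = 3 * #|P|%:R + rho0 * (opt%:R - #|P|%:R) by [].
by rewrite /a; field.
Qed.
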